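(* Suppose $\mathit{Act}$ is finite and $|\mathit{Act}|\ge2$. Then verdict equivalence $\simeq$ has no finite equational basis over open monitors: there is no finite set $\mathcal{E}$ of equations between monitors that is sound for $\simeq$ (i.e. $\mathcal{E}\vdash m=n$ implies $m\simeq n$) and complete for $\simeq$ (i.e. $m\simeq n$ implies $\mathcal{E}\vdash m=n$, for all monitors $m,n$ possibly containing variables).
   Context: Monitors: terms $m,n ::= v \mid a.m \mid m+n \mid x$ with $a\in\mathit{Act}$, $x$ ranging over a countably infinite set of variables, and verdicts $v::=\mathit{end}\mid\mathit{yes}\mid\mathit{no}$. Semantics: $\xrightarrow{\alpha}$ ($\alpha\in\mathit{Act}\cup\{\tau\}$, $\tau\notin\mathit{Act}$) is the least relation with $a.m\xrightarrow{a}m$; $m\xrightarrow{\alpha}m'$ implies $m+n\xrightarrow{\alpha}m'$ and $n+m\xrightarrow{\alpha}m'$; $v\xrightarrow{\alpha}v$ for verdicts $v$. Weak transitions: $m\xRightarrow{\varepsilon}m'$ iff $m(\xrightarrow{\tau})^*m'$; $m\xRightarrow{a}m'$ iff $m\xRightarrow{\varepsilon}\xrightarrow{a}\xRightarrow{\varepsilon}m'$; $m\xRightarrow{as'}m'$ ($s'\ne\varepsilon$) iff $m\xRightarrow{a}m_1\xRightarrow{s'}m'$. For closed (variable-free) $m$, $L_a(m)=\{s\in\mathit{Act}^*\mid m\xRightarrow{s}\mathit{yes}\}$, $L_r(m)=\{s\in\mathit{Act}^*\mid m\xRightarrow{s}\mathit{no}\}$; $m\simeq n$ iff $L_a(m)=L_a(n)$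 and $L_r(m)=L_r(n)$ for closed terms, and for open terms iff $\sigma(m)\simeq\sigma(n)$ for every substitution $\sigma$ mapping variables to closed monitors. $\mathcal{E}\vdash m=n$ denotes derivability from $\mathcal{E}$ by reflexivity, symmetry, transitivity, substitution (from $t=t'$ infer $\sigma(t)=\sigma(t')$) and congruence for $a.\_$ and $+$. *)

From Stdlib Require Import List.
From mathcomp Require Import all_boot.

Set Implicit Arguments.
Unset Strict Implicit.
Unset Printing Implicit Defensive.

Inductive verdict : Type := Vend | Vyes | Vno.

Inductive mon (A : Type) : Type :=
  | MVer : verdict -> mon A
  | MPre : A -> mon A -> mon A
  | MSum : mon A -> mon A -> mon A
  | MVar : nat -> mon A.

Arguments MVer {A} _.
Arguments MVar {A} _.

(* Labels: Act ∪ {τ}, with τ represented by None. *)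
Inductive step (A : Type) : mon A -> option A -> mon A -> Prop :=
  | st_pre : forall a m, step (MPre a m) (Some a) m
  | st_suml : forall m n al m', step m al m' -> step (MSum m n) al m'
  | st_sumr : forall m n al m', step m al m' -> step (MSum n m) al m'
  | st_ver : forall v al, step (MVer v) al (MVer v).

Inductive tau_star (A : Type) : mon A -> mon A -> Prop :=
  | ts_refl : forall m, tau_star m m
  | ts_step : forall m m1 m', step m None m1 -> tau_star m1 m' -> tau_star m m'.

Fixpoint wtrans (A : Type) (m : mon A) (s : seq A) (m' : mon A) : Prop :=
  match s with
  | [::] => tau_star m m'
  | a :: s' => exists m1 m2, tau_star m m1 /\ step m1 (Some a) m2 /\ wtrans m2 s' m'
  end.

Fixpoint closed (A : Type) (m : mon A) : Prop :=
  match m with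
  | MVer _ => True
  | MPre _ m => closed m
  | MSum m n => closed m /\ closed n
  | MVar _ => False
  end.

Definition acc (A : Type) (m : mon A) (s : seq A) : Prop := wtrans m s (MVer Vyes).
Definition rej (A : Type) (m : mon A) (s : seq A) : Prop := wtrans m s (MVer Vno).

Definition closed_equiv (A : Type) (m n : mon A) : Prop :=
  (forall s, acc m s <-> acc n s) /\ (forall s, rej m s <-> rej n s).

Fixpoint subst (A : Type) (sigma : nat -> mon A) (m : mon A) : mon A :=
  match m with
  | MVer v => MVer v
  | MPre a m => MPre a (subst sigma m)
  | MSum m n => MSum (subst sigma m) (subst sigma n)
  | MVar x => sigma x
  end.

Definition vequiv (A : Type) (m n : mon A) : Prop :=
  forall sigma : nat -> mon A, (forall x, closed (sigma x)) ->
    closed_equiv (subst sigma m) (subst sigma n).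

Inductive derivable (A : Type) (E : list (mon A * mon A)) : mon A -> mon A -> Prop :=
  | d_ax : forall m n, In (m, n) E -> derivable E m n
  | d_refl : forall m, derivable E m m
  | d_sym : forall m n, derivable E m n -> derivable E n m
  | d_trans : forall m n p, derivable E m n -> derivable E n p -> derivable E m p
  | d_subst : forall (sigma : nat -> mon A) m n,
      derivable E m n -> derivable E (subst sigma m) (subst sigma n)
  | d_pre : forall a m n, derivable E m n -> derivable E (MPre a m) (MPre a n)
  | d_sum : forall m m' n n', derivable E m m' -> derivable E n n' ->
      derivable E (MSum m n) (MSum m' n').

(* For every N the equation  x + a^N.x + guard_N = x + guard_N, where
   guard_N = a^N.(sum over all actions c of c.(yes + no)), is sound.  Against a
   finite, sound and complete set E we use an invariant of pairs of open terms,
   stability at level N: all substitution instances agree on a modified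
   reachability of yes along traces carrying a mark at depth N, in which a
   variable counts as accepting when it sits at positive depth with the mark
   still ahead.  Stability is preserved by equational logic
   (derivable_stable); every sound equation between terms of depth below N is
   stable (small_vequiv_stable), because in each situation the modified
   reachability coincides with ordinary reachability of a closed substitution
   instance, the delicate one using a and b to encode the depth of a variable;
   the equation above is not stable (eq_unstable).  Taking N beyond every depth
   occurring in E contradicts completeness. *)

From Pilot Require Import Defs.
From Stdlib Require Import List ClassicalEpsilon.
From mathcomp Require Import all_boot zify.

Set Implicit Arguments.
Unset Strict Implicit.
Unset Printing Implicit Defensive.

Fixpoint reaches {A : Type} (v : verdict) (u : seq A) (m : mon A) : Prop :=
  match m with
  | MVer w => w = v
  | MPre a m' => if u is c :: u' then c = a /\ reaches v u' m' else False
  | MSum m1 m2 => reaches v u m1 \/ reaches v u m2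
  | MVar _ => False
  end.

Section Reachability.
Variable A : Type.
Implicit Types (m M : mon A) (u : seq A) (v : verdict).

Lemma tau_star_reaches {m m' v u} : tau_star m m' -> reaches v u m' -> reaches v u m.
Proof.
elim=> // {}m m1 {}m' Hstep _ IH /IH.
by move: Hstep; move Eal: None => al Hstep; elim: Hstep Eal => //= *; auto.
Qed.

Lemma step_reaches {m m' c v u} :
  step m (Some c) m' -> reaches v u m' -> reaches v (c :: u) m.
Proof.
by move Eal: (Some c) => al Hstep; elim: Hstep Eal => //= [? ? [->]|*|*]; auto.
Qed.

Lemma wtrans_reaches m u v : wtrans m u (MVer v) -> reaches v u m.
Proof.
elim: u m => [|c u IH] m /=; first by move=> H; apply: tau_star_reaches H _.
case=> m1 [m2 [Htau [Hstep /IH Hu]]].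
exact: tau_star_reaches Htau (step_reaches Hstep Hu).
Qed.

Lemma verdict_wtrans v u : wtrans (MVer v) u (MVer v).
Proof.
elim: u => [|c u IH] /=; first exact: ts_refl.
by exists (MVer v), (MVer v); split; [apply: ts_refl | split; [constructor|]].
Qed.

Lemma wtrans_lift m M u v : (forall al m', step m al m' -> step M al m') ->
  wtrans m u (MVer v) -> wtrans M u (MVer v).
Proof.
move=> lift; case: u => [|c u] /= H.
  inversion H as [|? m1 ? Hs Ht]; subst.
  - exact: ts_step (lift _ _ (st_ver _ _)) (ts_refl _).
  - exact: ts_step (lift _ _ Hs) Ht.
case: H => m1 [m2 [Htau Hrest]].
inversion Htau as [|? m0 ? Hs Ht]; subst.
  by exists M, m2; case: Hrest; split; [apply: ts_refl | auto].
by exists m1, m2; split; first exact: ts_step (lift _ _ Hs) Ht.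
Qed.

Lemma reaches_wtrans m u v : reaches v u m -> wtrans m u (MVer v).
Proof.
elim: m u => [w|a m IH|m1 IH1 m2 IH2|x] u //=.
- by move=> <-; apply: verdict_wtrans.
- case: u => [|c u] //= [-> /IH Hu].
  by exists (MPre a m), m; split; [apply: ts_refl | split; [constructor|]].
- by case=> [/IH1|/IH2]; apply: wtrans_lift => al m'; [apply: st_suml | apply: st_sumr].
Qed.

Lemma wtrans_reachesE m u v : wtrans m u (MVer v) <-> reaches v u m.
Proof. by split; [apply: wtrans_reaches | apply: reaches_wtrans]. Qed.

End Reachability.

Section Substitution.
Variable A : Type.
Implicit Types (m : mon A) (sigma tau : nat -> mon A).

Lemma subst_comp sigma tau m :
  subst tau (subst sigma m) = subst (fun x => subst tau (sigma x)) m.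
Proof. by elim: m => //= [a m -> | m -> n ->]. Qed.

Lemma subst_var m : subst (@MVar A) m = m.
Proof. by elim: m => //= [a m -> | m -> n ->]. Qed.

Lemma closed_subst sigma m :
  (forall x, Defs.closed (sigma x)) -> Defs.closed (subst sigma m).
Proof. by move=> Hc; elim: m => //=. Qed.

Lemma subst_closed sigma m : Defs.closed m -> subst sigma m = m.
Proof. by elim: m => //= [a m IH /IH -> | m IHm n IHn [/IHm -> /IHn ->]]. Qed.

Lemma vequivE (l r : mon A) : vequiv l r <->
  forall sigma, (forall x, Defs.closed (sigma x)) -> forall v u, v <> Vend ->
    (reaches v u (subst sigma l) <-> reaches v u (subst sigma r)).
Proof.
split=> [H sigma Hc [] // u _ | H sigma Hc].
- by rewrite -!wtrans_reachesE; case: (H sigma Hc) => Hacc _; apply: Hacc.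
- by rewrite -!wtrans_reachesE; case: (H sigma Hc) => _ Hrej; apply: Hrej.
- by split=> u; rewrite /acc /rej !wtrans_reachesE; apply: H.
Qed.

End Substitution.

Section Combinators.
Variable A : Type.
Implicit Types (m k : mon A) (u t w : seq A) (v : verdict).

Lemma reaches_cat m v u t : reaches v u m -> reaches v (u ++ t) m.
Proof.
elim: m u => [w|a m IH|m1 IH1 m2 IH2|x] [|c u] //=; try by case=> [/IH1|/IH2]; auto.
by case=> -> /IH.
Qed.

Definition aprefix (a : A) (n : nat) m : mon A := iter n (MPre a) m.

Lemma subst_aprefix a n m sigma :
  subst sigma (aprefix a n m) = aprefix a n (subst sigma m).
Proof. by elim: n => //= n ->. Qed.

Lemma reaches_aprefix a n m v u :
  reaches v u (aprefix a n m) <-> exists2 u', u = nseq n a ++ u' & reaches v u' m.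
Proof.
elim: n u => [|n IH] u /=; first by split=> [|[u' ->]]; [exists u|].
case: u => [|c u] /=; first by split=> // [[]].
rewrite IH; split=> [[-> [u' -> Hu']] | [u' [-> ->] Hu']]; last by split=> //; exists u'.
by exists u'.
Qed.

Definition word w : mon A := foldr (@MPre A) (MVer Vyes) w.

Lemma closed_word w : Defs.closed (word w).
Proof. by elim: w. Qed.

Lemma reaches_word w u : reaches Vyes u (word w) <-> exists t, u = w ++ t.
Proof.
elim: w u => [|c w IH] [|c' u] /=; try by split=> // [[t]].
- by split=> _; [exists [::]|].
- by split=> _; [exists (c' :: u)|].
rewrite IH; split=> [[-> [t ->]] | [t [-> ->]]]; last by split=> //; exists t.
by exists t.
Qed.

Fixpoint msum_such (P : nat -> Prop) (f : nat -> mon A) (n : nat) : mon A :=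
  if n is i.+1 then
    if excluded_middle_informative (P i) then MSum (f i) (msum_such P f i)
    else msum_such P f i
  else MVer Vend.

Lemma closed_msum_such P f n :
  (forall i, Defs.closed (f i)) -> Defs.closed (msum_such P f n).
Proof. by move=> Hf; elim: n => //= n IH; case: excluded_middle_informative. Qed.

Lemma reaches_msum_such P f n v u : v <> Vend ->
  reaches v u (msum_such P f n) <-> exists i, [/\ i < n, P i & reaches v u (f i)].
Proof.
move=> Hv; elim: n => [|n IH] /=; first by split=> [/esym /Hv | [i []]].
case: excluded_middle_informative => HP /=; rewrite IH.
- split=> [[Hf | [i [Hi Pi Hfi]]] | [i [+ Pi Hfi]]].
  + by exists n.
  + by exists i; split=> //; apply: ltnW.
  + rewrite ltnS leq_eqVlt => /orP [/eqP Ein | Hin]; first by left; rewrite -Ein.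
    by right; exists i.
- split=> [[i [Hi Pi Hfi]] | [i [+ Pi Hfi]]]; first by exists i; split=> //; apply: ltnW.
  rewrite ltnS leq_eqVlt => /orP [/eqP Ein | Hin]; first by rewrite Ein in Pi.
  by exists i.
Qed.

End Combinators.

Fixpoint branches {A : Type} (cs : seq A) (k : mon A) : mon A :=
  if cs is c :: cs' then MSum (MPre c k) (branches cs' k) else MVer Vend.

Lemma closed_branches (A : Type) (cs : seq A) k :
  Defs.closed k -> Defs.closed (branches cs k).
Proof. by move=> Hk; elim: cs => //=. Qed.

Lemma reaches_branches (A : eqType) (cs : seq A) k c v u :
  c \in cs -> reaches v u k -> reaches v (c :: u) (branches cs k).
Proof.
move=> + Hk; elim: cs => //= c' cs IH.
by rewrite in_cons => /orP [/eqP -> | /IH]; auto.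
Qed.

Section SoundEquations.
Variable Act : finType.
Variables (a : Act) (N : nat).

(* The closed term a^N.(Σ_c c.(yes + no)): it reaches both verdicts on every
   trace extending a^N by at least one action. *)
Definition guard : mon Act :=
  aprefix a N (branches (enum Act) (MSum (MVer Vyes) (MVer Vno))).

Lemma closed_guard : Defs.closed guard.
Proof. by rewrite /guard /aprefix; elim: N => //=; apply: closed_branches. Qed.

Definition eq_lhs : mon Act := MSum (MSum (MVar 0) (aprefix a N (MVar 0))) guard.
Definition eq_rhs : mon Act := MSum (MVar 0) guard.

(* The summand a^N.x is redundant: a verdict it reaches on a^N either is
   already reached by x on the empty trace, hence on every trace, or is
   reached on a longer trace, where the guard reaches every verdict. *)
Lemma eq_sound : vequiv eq_lhs eq_rhs.
Proof.
apply/vequivE => sigma Hc v u Hv /=.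
rewrite subst_aprefix (subst_closed _ closed_guard).
split=> [[[Hx | /reaches_aprefix [[|c u'] -> Hx]] | Hg] | [Hx | Hg]]; auto.
- by left; rewrite cats0; exact: (reaches_cat (nseq N a) Hx).
- right; apply/reaches_aprefix; exists (c :: u') => //.
  by apply: reaches_branches; [rewrite mem_enum | case: v Hv {Hx} => //= _; auto].
Qed.

End SoundEquations.

Fixpoint depth {A : Type} (m : mon A) : nat :=
  match m with
  | MPre _ m' => (depth m').+1
  | MSum m1 m2 => maxn (depth m1) (depth m2)
  | _ => 0
  end.

Section MarkedReachability.
Variable A : Type.
Implicit Types (m l r : mon A) (s t : seq (option A)) (u : seq A).

(* Traces are extended by a mark [None].  [mreach d s m] holds when the term m,
   placed at depth d, reaches the verdict yes along the actions of s preceding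
   the mark, where a variable also counts as reaching yes when it occurs at
   positive depth and the mark still lies ahead. *)
Fixpoint mreach (d : nat) s m : Prop :=
  match m with
  | MVer v => v = Vyes
  | MPre c m' => if s is Some c' :: s' then c' = c /\ mreach d.+1 s' m' else False
  | MSum m1 m2 => mreach d s m1 \/ mreach d s m2
  | MVar _ => 0 < d /\ In None s
  end.

Definition marked (N d : nat) s : Prop :=
  forall s1 s2, s = s1 ++ None :: s2 -> d + size s1 = N.

Lemma marked_tail N d c s : marked N d (Some c :: s) -> marked N d.+1 s.
Proof. by move=> Hs s1 s2 Es; rewrite -(Hs (Some c :: s1) s2) ?Es // addSnnS. Qed.

Lemma marked_word u : marked (size u) 0 (map Some u ++ [:: None]).
Proof.
move=> s1 s2; elim: u s1 => [|c u IH] [|x s1] //=.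
- by case=> _; case: s1.
- by case=> _ /IH; rewrite !add0n => ->.
Qed.

Definition stable (N : nat) l r : Prop :=
  forall (sigma : nat -> mon A) d s, marked N d s ->
    mreach d s (subst sigma l) <-> mreach d s (subst sigma r).

Lemma derivable_stable N (E : list (mon A * mon A)) :
  (forall l r, In (l, r) E -> stable N l r) ->
  forall m n, derivable E m n -> stable N m n.
Proof.
move=> HE m n; elim=> {m n} [m n /HE //|m|m n _ IH|m n p _ IH1 _ IH2|tau m n _ IH
  |c m n _ IH|m m' n n' _ IH1 _ IH2] sigma d s Hs //.
- exact: iff_sym (IH _ _ _ Hs).
- exact: iff_trans (IH1 _ _ _ Hs) (IH2 _ _ _ Hs).
- by rewrite !subst_comp; apply: IH.
- by case: s Hs => [|[c'|] s] Hs //=; rewrite (IH _ _ _ (marked_tail Hs)).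
- by rewrite /= (IH1 _ _ _ Hs) (IH2 _ _ _ Hs).
Qed.

Lemma mreach_aprefix (a : A) n m d t :
  mreach d (map Some (nseq n a) ++ t) (aprefix a n m) <-> mreach (d + n) t m.
Proof.
elim: n d => [|n IH] d /=; first by rewrite addn0.
by rewrite IH addSnnS; split=> [[]|].
Qed.

Lemma mreach_branches_mark (cs : seq A) k d t : ~ mreach d (None :: t) (branches cs k).
Proof. by elim: cs => //= c cs IH [|]. Qed.

End MarkedReachability.

(* For N > 0 the sound equation  x + a^N.x + guard = x + guard  is not stable at
   level N: along a^N followed by the mark, the variable under a^N counts while
   the variable at depth 0 and the guard (which needs one more action) do not. *)
Lemma eq_unstable (Act : finType) (a : Act) N :
  0 < N -> ~ stable N (eq_lhs a N) (eq_rhs a N).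
Proof.
move=> N_gt0 Hst.
have Hmark : marked N 0 (map Some (nseq N a) ++ [:: None]).
  by rewrite -{1}(size_nseq N a); apply: marked_word.
have := Hst (@MVar Act) _ _ Hmark; rewrite !subst_var => {}Hst.
have : mreach 0 (map Some (nseq N a) ++ [:: None]) (eq_rhs a N).
  by apply/Hst; left; right; apply/mreach_aprefix => /=; auto.
by case=> [[]|/mreach_aprefix /mreach_branches_mark].
Qed.

Section UnmarkedAndDeepTraces.
Variable A : Type.
Implicit Types (m l r : mon A) (s t : seq (option A)) (u : seq A).

Lemma split_at_mark s :
  (exists u, s = map Some u) \/ exists u t, s = map Some u ++ None :: t.
Proof.
elim: s => [|[c|] s IH]; first by left; exists [::].
- by case: IH => [[u ->]|[u [t ->]]]; [left; exists (c :: u) | right; exists (c :: u), t].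
- by right; exists [::], s.
Qed.

(* Without a mark ahead, variables never count: [mreach] is reachability of yes
   after substituting the inert verdict end for every variable. *)
Lemma mreach_unmarked m d u :
  mreach d (map Some u) m <-> reaches Vyes u (subst (fun=> MVer Vend) m).
Proof.
have no_mark u' : ~ In None (map Some u') by elim: u' => //= c u' IH [].
elim: m d u => [v|c m IH|m1 IH1 m2 IH2|x] d u /=.
- by [].
- by case: u => [|c' u] //=; rewrite IH.
- by rewrite IH1 IH2.
- by split=> // [[_ /no_mark]].
Qed.

(* With a mark ahead and positive depth, every variable reached counts: [mreach]
   is reachability of yes after substituting yes for every variable. *)
Lemma mreach_deep m d u t : 0 < d ->
  mreach d (map Some u ++ None :: t) m <-> reaches Vyes u (subst (fun=> MVer Vyes) m).
Proof.
have mark u' : In None (map Some u' ++ None :: t) by apply: in_or_app; right; left.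
elim: m d u => [v|c m IH|m1 IH1 m2 IH2|x] d u d_gt0 /=.
- by [].
- by case: u => [|c' u] //=; rewrite IH.
- by rewrite IH1 ?IH2.
- by split=> // _; split.
Qed.

End UnmarkedAndDeepTraces.

Section ShallowMarks.
Variable A : Type.
Variables (a b : A).
Hypothesis a_neq_b : a <> b.
Implicit Types (m l : mon A) (t : seq (option A)) (u w : seq A).

(* The suffix of u from position k, followed by a signature a b^|u| that makes
   the starting position k recoverable. *)
Definition signed u k : seq A := drop k u ++ a :: nseq (size u) b.

(* No signed suffix is a proper prefix of another: the letter a ending the
   shorter one's u-part would face a letter b of the signature. *)
Lemma signed_prefix_inj u i k w : i <= size u -> k <= size u ->
  signed u k = signed u i ++ w -> i = k.
Proof.
move=> le_iu le_ku E.
have := congr1 size E; rewrite /signed !size_cat !size_drop /= size_nseq => Esize.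
have [lt_ki|] := ltnP k i; last by lia.
have := congr1 (nth a ^~ (size u - k)) E; rewrite /signed /=.
rewrite !nth_cat !size_cat !size_drop /= size_nseq ltnn subnn.
rewrite ifT; last by lia.
rewrite ifF; last by lia.
have -> : size u - k - (size u - i) = (i - k).-1.+1 by lia.
by rewrite /= nth_nseq ifT; [move/a_neq_b | lia].
Qed.

(* The closed substitution simulating [mreach] at depth 0 along the trace
   u, mark, t with |u| = N: the variable x becomes the sum of the words
   [signed u q] over the depths q < N at which [sigma x] satisfies [mreach]. *)
Definition encode u t (sigma : nat -> mon A) (x : nat) : mon A :=
  msum_such (fun q => mreach q (drop q (map Some u ++ None :: t)) (sigma x))
            (fun q => word (signed u q)) (size u).

Lemma closed_encode u t sigma x : Defs.closed (encode u t sigma x).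
Proof. by apply: closed_msum_such => q; apply: closed_word. Qed.

(* Within depth |u|, [mreach] from depth k along the marked trace is plain
   reachability of yes along the signed suffix at k, for the encoding
   substitution: a variable met at depth k is simulated by exactly the summand
   [word (signed u k)] of its encoding. *)
Lemma mreach_shallow u t sigma l k : k + depth l < size u ->
  mreach k (drop k (map Some u ++ None :: t)) (subst sigma l) <->
  reaches Vyes (signed u k) (subst (encode u t sigma) l).
Proof.
elim: l k => [v|c l IH|l1 IH1 l2 IH2|x] k /= Hk.
- by [].
- have lt_ku : k < size u by lia.
  rewrite (drop_nth (Some a)) ?size_cat ?size_map /=; last by lia.
  rewrite /signed (drop_nth a lt_ku) nth_cat size_map lt_ku (nth_map a) //=.
  by rewrite IH //; lia.
- by rewrite IH1 ?IH2 //; lia.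
- rewrite /encode reaches_msum_such //.
  split=> [Hx | [q [lt_qu Hq /= /reaches_word [w Ew]]]].
  + by exists k; split=> //=; [lia | apply/reaches_word; exists [::]; rewrite cats0].
  + have Eqk : q = k by apply: signed_prefix_inj Ew; lia.
    by rewrite -Eqk.
Qed.

End ShallowMarks.

(* Along a marked trace, [mreach] is reachability of yes for a closed
   substitution instance, in each of three situations: no mark (variables
   become end), mark seen from positive depth (variables become yes), or mark
   seen from depth 0 (variables become their encodings, which needs two
   distinct actions). *)
Lemma small_vequiv_stable (A : Type) (a b : A) N (l r : mon A) : a <> b ->
  vequiv l r -> depth l < N -> depth r < N -> stable N l r.
Proof.
move=> a_neq_b /vequivE Hv Hl Hr sigma d s Hs.
have closed_const v x : Defs.closed (subst (fun=> MVer v) (sigma x)).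
  exact: closed_subst.
case: (split_at_mark s) => [[u ->] | [u [t Es]]].
  by rewrite !mreach_unmarked !subst_comp; apply: Hv.
have := Hs _ _ Es; rewrite size_map; subst s; case: d {Hs} => [|d] HdN.
- have shallow m : depth m < N ->
      mreach 0 (map Some u ++ None :: t) (subst sigma m) <->
      reaches Vyes (signed a b u 0) (subst (encode a b u t sigma) m).
    move=> Hm; rewrite -[map Some u ++ _]drop0.
    by apply: (mreach_shallow a_neq_b); lia.
  by rewrite !shallow //; apply: Hv => // x; apply: closed_encode.
- by rewrite !mreach_deep // !subst_comp; apply: Hv.
Qed.

Definition max_depth (A : Type) (E : list (mon A * mon A)) : nat :=
  foldr (fun e k => maxn (maxn (depth e.1) (depth e.2)) k) 0 E.

Lemma depth_le_max_depth (A : Type) (E : list (mon A * mon A)) l r :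
  In (l, r) E -> depth l <= max_depth E /\ depth r <= max_depth E.
Proof. by elim: E => //= e E IH [-> | /IH] /=; lia. Qed.

(* Given a finite sound and complete E, take N beyond the depth of its terms:
   every equation of E is stable at level N, hence so is every derivable one,
   but the sound equation x + a^N.x + guard = x + guard is not. *)
Theorem mainTheorem20 (Act : finType) (hAct : 2 <= #|Act|) :
  ~ exists E : list (mon Act * mon Act),
      (forall m n : mon Act, derivable E m n -> vequiv m n) /\
      (forall m n : mon Act, vequiv m n -> derivable E m n).
Proof.
case=> E [sound complete].
have [a [b [_ _ /eqP a_neq_b]]] := card_gt1P hAct.
pose N := (max_depth E).+1.
apply: (eq_unstable (a := a) (ltn0Sn _ : 0 < N)).
apply: (derivable_stable _ (complete _ _ (eq_sound a N))) => l r HE.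
have [Hl Hr] := depth_le_max_depth HE.
apply: (small_vequiv_stable a_neq_b); rewrite ?ltnS //.
exact/sound/d_ax.
Qed.
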